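(* Let $L$ be a Lie algebra over a field $K$ of characteristic $\neq 2$. The following are equivalent: (i) for any $\varphi,\psi \in \mathrm{HomLie}(L)$, $\frac12(\varphi\circ\psi + \psi\circ\varphi) \in \mathrm{HomLie}(L)$; (ii) for any $\varphi \in \mathrm{HomLie}(L)$, $\varphi^2 \in \mathrm{HomLie}(L)$; (iii) for any $\varphi \in \mathrm{HomLie}(L)$ and any polynomial $f \in K[t]$, $f(\varphi) \in \mathrm{HomLie}(L)$; (iv) for any $\varphi,\psi \in \mathrm{HomLie}(L)$, the bilinear map $F_{\varphi,\psi}: L\times L \to L$, $F_{\varphi,\psi}(x,y) = [\varphi(x),\psi(y)] + [\psi(x),\varphi(y)]$, satisfies $[F_{\varphi,\psi}(x,y),z] + [F_{\varphi,\psi}(z,x),y] + [F_{\varphi,\psi}(y,z),x] = 0$ for all $x,y,z \in L$.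
   Context: A Hom-Lie structure on a Lie algebra $L$ is a linear map $\varphi: L \to L$ satisfying $[[x,y],\varphi(z)] + [[z,x],\varphi(y)] + [[y,z],\varphi(x)] = 0$ for all $x,y,z \in L$. $\mathrm{HomLie}(L)$ denotes the vector space of all Hom-Lie structures on $L$; $\circ$ denotes composition of maps. *)

From HB Require Import structures.
From mathcomp Require Import all_boot all_order all_algebra.
Set Implicit Arguments. Unset Strict Implicit. Unset Printing Implicit Defensive.
Import GRing.Theory.
Local Open Scope ring_scope.

Definition linmap (K : fieldType) (L : lmodType K) (f : L -> L) : Prop :=
  forall (a : K) (x y : L), f (a *: x + y) = a *: f x + f y.

Definition is_lie_bracket (K : fieldType) (L : lmodType K) (br : L -> L -> L) : Prop :=
  [/\ (forall z : L, linmap (fun x => br x z)),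
      (forall x : L, linmap (br x)),
      (forall x : L, br x x = 0) &
      (forall x y z : L, br x (br y z) + br y (br z x) + br z (br x y) = 0)].

Definition HomLie (K : fieldType) (L : lmodType K) (br : L -> L -> L) (phi : L -> L) : Prop :=
  linmap phi /\
  forall x y z : L,
    br (br x y) (phi z) + br (br z x) (phi y) + br (br y z) (phi x) = 0.

Definition poly_map (K : fieldType) (L : lmodType K) (f : {poly K}) (phi : L -> L) : L -> L :=
  fun x => \sum_(i < size f) f`_i *: iter i phi x.

Definition Fmap (K : fieldType) (L : lmodType K) (br : L -> L -> L) (phi psi : L -> L)
  (x y : L) : L := br (phi x) (psi y) + br (psi x) (phi y).

(* For Hom-Lie structures p and q, the Hom-Lie identity of p at (y, z, q x)
   together with the Jacobi identity expresses [[y,z], p (q x)] as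
   [[p z, q x], y] plus a difference G(z,x,y) - G(x,y,z).  Doing the same with
   p and q swapped and summing cyclically, the G-terms telescope: the Hom-Lie
   defect of p q + q p is exactly the cyclic sum of [F_{p,q}(x,y), z], which
   gives (i) <-> (iv) since 2 is invertible.  (ii) implies (i) by polarisation,
   (i) makes every power of phi, hence every f(phi), a Hom-Lie structure, and
   (iii) gives (ii) with f = t^2. *)
From HB Require Import structures.
From mathcomp Require Import all_boot all_order all_algebra.
Set Implicit Arguments. Unset Strict Implicit. Unset Printing Implicit Defensive.
Import GRing.Theory.
Local Open Scope ring_scope.

Section LinearMaps.
Variables (K : fieldType) (L : lmodType K).

Lemma linmapD (f : L -> L) : linmap f -> forall u v, f (u + v) = f u + f v.
Proof. by move=> lf u v; have := lf 1 u v; rewrite !scale1r. Qed.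

Lemma linmap_eq (f g : L -> L) : f =1 g -> linmap f -> linmap g.
Proof. by move=> fg lf a u v; rewrite -!fg lf. Qed.

Lemma linmap_comb (a : K) (f g : L -> L) :
  linmap f -> linmap g -> linmap (fun v => a *: f v + g v).
Proof.
by move=> lf lg b u v; rewrite lf lg !scalerDr !scalerA mulrC addrACA.
Qed.

Lemma linmap_comp (f g : L -> L) : linmap f -> linmap g -> linmap (fun v => f (g v)).
Proof. by move=> lf lg b u v; rewrite lg lf. Qed.

Lemma linmap0 : linmap (fun _ : L => 0).
Proof. by move=> b u v; rewrite scaler0 addr0. Qed.

End LinearMaps.

Section HomLieStructures.
Variables (K : fieldType) (L : lmodType K) (br : L -> L -> L).
Hypothesis br_lie : is_lie_bracket br.

Lemma brDl x y z : br (x + y) z = br x z + br y z.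
Proof. by case: br_lie => /(_ z) /linmapD. Qed.

Lemma brDr x y z : br z (x + y) = br z x + br z y.
Proof. by case: br_lie => _ /(_ z) /linmapD. Qed.

Lemma br0r z : br z 0 = 0.
Proof. by apply: (addrI (br z 0)); rewrite -brDr !addr0. Qed.

Lemma brZr a x z : br z (a *: x) = a *: br z x.
Proof. by case: br_lie => _ /(_ z a x 0); rewrite !addr0 br0r addr0. Qed.

Lemma brC x y : br y x = - br x y.
Proof.
case: br_lie => _ _ brxx _; have := brxx (x + y).
by rewrite brDl !brDr !brxx add0r addr0 addrC => /eqP; rewrite addr_eq0 => /eqP.
Qed.

Lemma jacobi_l a b c : br (br a b) c + br (br b c) a + br (br c a) b = 0.
Proof.
case: br_lie => _ _ _ /(_ c a b).
rewrite (brC (br a b)) (brC (br b c)) (brC (br c a)) -!opprD.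
by move/eqP; rewrite oppr_eq0 => /eqP.
Qed.

Definition hom_jacobiator (g : L -> L) (x y z : L) : L :=
  br (br x y) (g z) + br (br z x) (g y) + br (br y z) (g x).

Lemma hom_jacobiatorZ (a : K) (g : L -> L) x y z :
  hom_jacobiator (fun v => a *: g v) x y z = a *: hom_jacobiator g x y z.
Proof. by rewrite /hom_jacobiator !brZr -!scalerDr. Qed.

Lemma hom_jacobiator_comb (a : K) (f g : L -> L) x y z :
  hom_jacobiator (fun v => a *: f v + g v) x y z
  = a *: hom_jacobiator f x y z + hom_jacobiator g x y z.
Proof.
by rewrite /hom_jacobiator !brDr !brZr !scalerDr [X in X + _ = _]addrACA [LHS]addrACA.
Qed.

Lemma br_br_hom_lie (g : L -> L) :
    (forall x y z, hom_jacobiator g x y z = 0) ->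
  forall u y z, br (br y z) (g u) = br (br (g z) u) y + br (br y (g z)) u - br (br z u) (g y).
Proof.
move=> g_hom u y z; have := g_hom y z u; rewrite /hom_jacobiator.
have := jacobi_l u y (g z).
move/eqP; rewrite -addrA addr_eq0 => /eqP ->.
move/eqP; rewrite -addrA addr_eq0 => /eqP ->.
by rewrite opprD opprK (addrC (br (br y (g z)) u)).
Qed.

Lemma cyclic_Fmap_hom_jacobiator (p q : L -> L) :
    (forall x y z, hom_jacobiator p x y z = 0) ->
    (forall x y z, hom_jacobiator q x y z = 0) ->
  forall x y z,
  br (Fmap br p q x y) z + br (Fmap br p q z x) y + br (Fmap br p q y z) x
  = hom_jacobiator (fun v => p (q v) + q (p v)) x y z.
Proof.
move=> p_hom q_hom x y z.
pose G a b c := br (br c (p a)) (q b) + br (br c (q a)) (p b).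
have expand a b c :
    br (br b c) (p (q a) + q (p a)) = br (Fmap br p q c a) b + (G c a b - G a b c).
  rewrite brDr (br_br_hom_lie p_hom (q a)) (br_br_hom_lie q_hom (p a)) /Fmap brDl /G.
  rewrite [LHS]addrACA [X in X + _ = _]addrACA -opprD [RHS]addrA.
  by rewrite (addrC (br (br c (q a)) (p b))).
have telescope (u v w : L) : (u - v) + (w - u) + (v - w) = 0.
  by rewrite addrAC !subrKA subrr.
rewrite /hom_jacobiator !expand [X in _ = X + _]addrACA [RHS]addrACA telescope addr0.
by rewrite -[RHS]addrA [RHS]addrC.
Qed.

Lemma HomLie_eq (f g : L -> L) : f =1 g -> HomLie br f -> HomLie br g.
Proof.
move=> fg [lf f_hom]; split=> [|x y z]; first exact: linmap_eq lf.
by rewrite -!fg; apply: f_hom.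
Qed.

Lemma HomLie_comb (a : K) (f g : L -> L) :
  HomLie br f -> HomLie br g -> HomLie br (fun v => a *: f v + g v).
Proof.
move=> [lf f_hom] [lg g_hom]; split=> [|x y z]; first exact: linmap_comb.
have := hom_jacobiator_comb a f g x y z; rewrite /hom_jacobiator => ->.
by rewrite f_hom g_hom scaler0 addr0.
Qed.

Lemma HomLie0 : HomLie br (fun _ => 0).
Proof. by split=> [|x y z]; [exact: linmap0 | rewrite !br0r !addr0]. Qed.

Lemma HomLie_id : HomLie br id.
Proof. by split=> [//|x y z]; rewrite addrAC jacobi_l. Qed.

Lemma HomLieD (f g : L -> L) : HomLie br f -> HomLie br g -> HomLie br (fun v => f v + g v).
Proof. by move=> hf hg; apply: HomLie_eq (HomLie_comb 1 hf hg) => v; rewrite scale1r. Qed.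

Lemma HomLieB (f g : L -> L) : HomLie br f -> HomLie br g -> HomLie br (fun v => f v - g v).
Proof.
by move=> hf hg; apply: HomLie_eq (HomLie_comb (-1) hg hf) => v; rewrite scaleN1r addrC.
Qed.

Lemma HomLieZ (a : K) (f : L -> L) : HomLie br f -> HomLie br (fun v => a *: f v).
Proof. by move=> hf; apply: HomLie_eq (HomLie_comb a hf HomLie0) => v; rewrite addr0. Qed.

Lemma HomLie_sum (I : Type) (r : seq I) (c : I -> K) (g : I -> L -> L) :
  (forall i, HomLie br (g i)) -> HomLie br (fun x => \sum_(i <- r) c i *: g i x).
Proof.
move=> hg; elim: r => [|i r IHr].
  by apply: HomLie_eq HomLie0 => x; rewrite big_nil.
by apply: HomLie_eq (HomLie_comb (c i) (hg i) IHr) => x; rewrite big_cons.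
Qed.

Definition anticomm_closed : Prop :=
  forall phi psi, HomLie br phi -> HomLie br psi ->
    HomLie br (fun x => 2%:R^-1 *: (phi (psi x) + psi (phi x))).

Definition sq_closed : Prop :=
  forall phi, HomLie br phi -> HomLie br (fun x => phi (phi x)).

Lemma anticomm_closed_sq : sq_closed -> anticomm_closed.
Proof.
move=> sq p q hp hq; have hpq := HomLieD hp hq.
apply: HomLie_eq (HomLieZ 2%:R^-1 (HomLieB (HomLieB (sq _ hpq) (sq _ hp)) (sq _ hq))) => v.
rewrite !(linmapD hp.1) !(linmapD hq.1); congr (_ *: _).
by rewrite -addrA -opprD (addrC (q (p v))) addrACA addrC addKr.
Qed.

Hypothesis two_neq0 : (2%:R : K) != 0.

Lemma scale_half_double (w : L) : 2%:R^-1 *: (w + w) = w.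
Proof. by rewrite -mulr2n -scaler_nat scalerA mulVf ?scale1r. Qed.

Lemma sq_closed_anticomm : anticomm_closed -> sq_closed.
Proof.
by move=> half phi hphi; apply: HomLie_eq (half _ _ hphi hphi) => v; rewrite scale_half_double.
Qed.

Lemma HomLie_iter : anticomm_closed -> forall phi n, HomLie br phi -> HomLie br (iter n phi).
Proof.
move=> half phi n hphi; elim: n => [|n IHn]; first exact: HomLie_id.
by apply: HomLie_eq (half phi _ hphi IHn) => v; rewrite -iterSr scale_half_double.
Qed.

Lemma HomLie_poly_map : anticomm_closed ->
  forall phi (f : {poly K}), HomLie br phi -> HomLie br (poly_map f phi).
Proof. by move=> half phi f hphi; apply: HomLie_sum => i; apply: HomLie_iter. Qed.

Lemma HomLie_half_anticommP (p q : L -> L) : HomLie br p -> HomLie br q ->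
  HomLie br (fun x => 2%:R^-1 *: (p (q x) + q (p x))) <->
  (forall x y z,
     br (Fmap br p q x y) z + br (Fmap br p q z x) y + br (Fmap br p q y z) x = 0).
Proof.
move=> [lp p_hom] [lq q_hom]; pose h v := p (q v) + q (p v).
split=> [[_ half_hom] x y z | cyc_eq0].
  rewrite cyclic_Fmap_hom_jacobiator //.
  have /eqP := half_hom x y z : hom_jacobiator (fun v => 2%:R^-1 *: h v) x y z = 0.
  by rewrite hom_jacobiatorZ scaler_eq0 invr_eq0 (negPf two_neq0) => /eqP.
split=> [|x y z].
  have lh : linmap h.
    by apply: linmap_eq (linmap_comb 1 (linmap_comp lp lq) (linmap_comp lq lp)) => v;
       rewrite scale1r.
  by apply: linmap_eq (linmap_comb 2%:R^-1 lh (@linmap0 _ L)) => v; rewrite addr0.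
change (hom_jacobiator (fun v => 2%:R^-1 *: h v) x y z = 0).
by rewrite hom_jacobiatorZ -cyclic_Fmap_hom_jacobiator // cyc_eq0 scaler0.
Qed.

End HomLieStructures.

Lemma poly_map_Xn (K : fieldType) (L : lmodType K) (phi : L -> L) (n : nat) :
  poly_map 'X^n phi =1 iter n phi.
Proof.
move=> x; rewrite /poly_map size_polyXn big_ord_recr /= coefXn eqxx scale1r.
by rewrite big1 ?add0r // => i _; rewrite coefXn ltn_eqF // scale0r.
Qed.

Theorem lemma1p2 (K : fieldType) (L : lmodType K) (br : L -> L -> L) :
  is_lie_bracket br -> (2%:R : K) != 0 ->
  [<-> (forall phi psi, HomLie br phi -> HomLie br psi ->
          HomLie br (fun x => 2%:R^-1 *: (phi (psi x) + psi (phi x))));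
       (forall phi, HomLie br phi -> HomLie br (fun x => phi (phi x)));
       (forall phi (f : {poly K}), HomLie br phi -> HomLie br (poly_map f phi));
       (forall phi psi, HomLie br phi -> HomLie br psi ->
          forall x y z : L,
            br (Fmap br phi psi x y) z + br (Fmap br phi psi z x) y
            + br (Fmap br phi psi y z) x = 0)].
Proof.
move=> br_lie two_neq0; tfae=> [half | sq | poly | cyc].
- exact: sq_closed_anticomm.
- exact: HomLie_poly_map (anticomm_closed_sq br_lie sq).
- have sq : sq_closed br.
    by move=> phi hphi; apply: HomLie_eq (poly _ 'X^2 hphi) => x; rewrite poly_map_Xn.
  move=> p q hp hq; apply/(HomLie_half_anticommP br_lie two_neq0 hp hq).
  exact: anticomm_closed_sq.
- by move=> p q hp hq; apply/(HomLie_half_anticommP br_lie two_neq0 hp hq)/cyc.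
Qed.
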